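(* Let $N\ge 1$ be an integer. If a function class $\mathcal{G}$ of functions $\mathcal{Z}\to\mathbb{R}$ is an $N$-composite of a function class $\mathcal{F}$ of functions $\mathcal{X}\to\mathbb{R}$, then $\mathsf{dis}(\mathcal{G}) \le N\,\mathsf{dis}(\mathcal{F})$.
   Context: For a measurable space $\mathcal{X}$ and a class $\mathcal{F}$ of measurable functions $\mathcal{X}\to\mathbb{R}$, the disagreement coefficient is $$\mathsf{dis}(\mathcal{F}) = \sup_{\varepsilon,\delta>0}\ \sup_{\nu\in\Delta(\mathcal{X})} \frac{\delta^2}{\varepsilon^2}\,\mathbb{P}_{p\sim\nu}\Big(\exists f\in\mathcal{F}:\ \mathbb{E}_{q\sim\nu}[f(q)^2]\le\varepsilon^2\ \text{and}\ |f(p)|>\delta\Big),$$ where $\Delta(\mathcal{X})$ is the set of probability measures on $\mathcal{X}$. A class $\mathcal{G}$ of functions $\mathcal{Z}\to\mathbb{R}$ is an $N$-composite of $\mathcal{F}$ (functions $\mathcal{X}\to\mathbb{R}$) if there is a partition of $\mathcal{Z}$ into disjoint measurable sets $\mathcal{Z}_1,\dots,\mathcal{Z}_N$ and measurable maps $h_i:\mathcal{Z}_i\to\mathcal{X}$, $i\in[N]$, such that for every $g\in\mathcal{G}$ there exist $f_1,\dots,f_N\in\mathcal{F}$ with $g(x)=f_i(h_i(x))$ for all $x\in\mathcal{Z}_i$ and all $i\in[N]$. *)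

From HB Require Import structures.
From mathcomp Require Import all_boot all_order all_algebra.
From mathcomp Require Import all_classical all_reals all_analysis.
Set Implicit Arguments. Unset Strict Implicit. Unset Printing Implicit Defensive.
Import Order.TTheory GRing.Theory Num.Theory.
Local Open Scope classical_set_scope.
Local Open Scope ring_scope.

(* Outer probability of an arbitrary (possibly non-measurable) event:
   inf of nu(A) over measurable supersets A. Agrees with nu(E) when E is
   measurable. *)
Definition outer_prob d (T : measurableType d) (R : realType)
  (nu : probability T R) (E : set T) : \bar R :=
  ereal_inf [set nu A | A in [set A | measurable A /\ E `<=` A]].

Definition dis_event d (T : measurableType d) (R : realType)
  (F : set (T -> R)) (nu : probability T R) (eps delta : R) : set T :=
  [set p | exists f, F f /\
     (\int[nu]_q ((f q) ^+ 2)%:E <= (eps ^+ 2)%:E)%E /\ delta < `|f p|].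

Definition dis d (T : measurableType d) (R : realType) (F : set (T -> R))
  : \bar R :=
  ereal_sup [set x | exists (eps delta : R) (nu : probability T R),
     0 < eps /\ 0 < delta /\
     x = ((delta ^+ 2 / eps ^+ 2)%:E * outer_prob nu (dis_event F nu eps delta))%E].

Definition is_composite dX dZ (X : measurableType dX) (Z : measurableType dZ)
  (R : realType) (N : nat) (G : set (Z -> R)) (F : set (X -> R)) : Prop :=
  exists (Zs : 'I_N -> set Z) (h : 'I_N -> Z -> X),
    (forall i, measurable (Zs i)) /\
    (forall i j, i != j -> Zs i `&` Zs j = set0) /\
    (\bigcup_(i in [set: 'I_N]) Zs i = [set: Z]) /\
    (forall i, measurable_fun (Zs i) (h i)) /\
    (forall g, G g -> exists f : 'I_N -> X -> R,
        (forall i, F (f i)) /\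
        (forall i x, Zs i x -> g x = f i (h i x))).

From HB Require Import structures.
From mathcomp Require Import all_boot all_order all_algebra.
From mathcomp Require Import all_classical all_reals all_analysis.
From mathcomp Require Import measurable_realfun.
From mathcomp.algebra_tactics Require Import ring.

(* Conditioning [nu] on the piece [Z_i], of mass
   [q_i], and pushing it forward by [h_i] gives a probability [nu_i] on [X]. If
   [g] in [G] has [E_nu g^2 <= eps^2] and [|g z| > delta] with [z] in [Z_i],
   then the component [f_i] of [g] has [E_nu_i f_i^2 <= eps^2 / q_i] and
   [|f_i (h_i z)| > delta]. So the part of the disagreement region of [G] lying
   in [Z_i] has outer [nu]-probability at most
   [q_i * dis(F) * (eps^2 / q_i) / delta^2 = dis(F) * eps^2 / delta^2], and
   finite subadditivity of outer probability sums these [N] bounds. *)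

Set Implicit Arguments.
Unset Strict Implicit.
Unset Printing Implicit Defensive.
Import Order.TTheory GRing.Theory Num.Theory.
Local Open Scope classical_set_scope.
Local Open Scope ring_scope.

Section outer_prob.
Local Open Scope ereal_scope.
Context d (T : measurableType d) (R : realType) (nu : probability T R).

Lemma outer_prob_ge0 (E : set T) : 0 <= outer_prob nu E.
Proof. by apply: le_ereal_inf_tmp => _ [A _ <-]; exact: measure_ge0. Qed.

Lemma outer_prob_le_measure (E A : set T) :
  measurable A -> E `<=` A -> outer_prob nu E <= nu A.
Proof. by move=> mA EA; apply: ge_ereal_inf; exists (nu A) => //; exists A. Qed.

Lemma outer_prob_fin_num (E : set T) : outer_prob nu E \is a fin_num.
Proof.
rewrite ge0_fin_numE ?outer_prob_ge0 //.
have := outer_prob_le_measure measurableT (@subsetT _ E).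
by rewrite probability_setT => /le_lt_trans; apply; rewrite ltry.
Qed.

Lemma le_outer_prob (E E' : set T) : E `<=` E' -> outer_prob nu E <= outer_prob nu E'.
Proof.
move=> EE'; apply: ereal_inf_le_tmp => _ [A [mA E'A] <-].
by exists A => //; split => //; exact: subset_trans E'A.
Qed.

Lemma outer_prob_approx (E : set T) (eps : R) : (0 < eps)%R ->
  exists A, [/\ measurable A, E `<=` A & nu A <= outer_prob nu E + eps%:E].
Proof.
move=> eps0.
have : outer_prob nu E < outer_prob nu E + eps%:E.
  by rewrite lteDl ?outer_prob_fin_num ?lte_fin.
by move=> /ereal_inf_lt[_ [A [mA EA] <-] /ltW]; exists A.
Qed.

Lemma outer_prob_setU (E1 E2 : set T) :
  outer_prob nu (E1 `|` E2) <= outer_prob nu E1 + outer_prob nu E2.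
Proof.
apply/lee_addgt0Pr => eps eps0.
have eps20 : (0 < eps / 2)%R by rewrite divr_gt0.
have [A1 [mA1 EA1 nuA1]] := outer_prob_approx E1 eps20.
have [A2 [mA2 EA2 nuA2]] := outer_prob_approx E2 eps20.
apply: le_trans (outer_prob_le_measure (measurableU _ _ mA1 mA2) (setUSS EA1 EA2)) _.
apply: le_trans (measureU2 nu mA1 mA2) _.
apply: le_trans (leeD nuA1 nuA2) _.
by rewrite addeACA -EFinD -splitr.
Qed.

Lemma outer_prob_bigsetU n (E : 'I_n -> set T) :
  outer_prob nu (\big[setU/set0]_(i < n) E i) <= \sum_(i < n) outer_prob nu (E i).
Proof.
elim: n E => [|n IHn] E.
  by rewrite !big_ord0 -(measure0 nu) outer_prob_le_measure.
rewrite !big_ord_recr /=; apply: le_trans (outer_prob_setU _ _) _.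
exact: leeD (IHn _) (lexx _).
Qed.

End outer_prob.

Section restr_pushforward.
Local Open Scope ereal_scope.
Context {dZ dX : measure_display} {Z : measurableType dZ} {X : measurableType dX}
  {R : realType}.

Lemma ge0_integral_mrestr (mu : measure Z R) (D : set Z) (mD : measurable D)
    (f : Z -> \bar R) :
  measurable_fun setT f -> (forall z, 0 <= f z) ->
  \int[mrestr mu mD]_z f z = \int[mu]_(z in D) f z.
Proof.
move=> mf f0; rewrite -(setUv D) ge0_integral_setU //; last 3 first.
- exact: measurableC.
- by rewrite setUv.
- by rewrite disj_set2E setICr.
rewrite (eq_measure_integral mu); last by move=> A mA AD; rewrite /= /mrestr setIidl.
rewrite [X in _ + X](eq_measure_integral mzero); last first.
  move=> A mA ADc; rewrite /= /mrestr /mzero.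
  suff -> : A `&` D = set0 by rewrite measure0.
  by apply/seteqP; split => // z [/ADc].
by rewrite integral_measure_zero adde0.
Qed.

Variables (nu : measure Z R) (D : set Z) (h : Z -> X).
Hypotheses (mD : measurable D) (mh : measurable_fun D h).

(* The unused proof arguments let the measure instance below depend on [mD] and
   [mh]. *)
Definition restr_pushforward of measurable D & measurable_fun D h :=
  fun A : set X => nu (D `&` h @^-1` A).

Let rp := restr_pushforward mD mh.

Let rp0 : rp set0 = 0.
Proof. by rewrite /rp /restr_pushforward preimage_set0 setI0 measure0. Qed.

Let rp_ge0 A : 0 <= rp A.
Proof. exact: measure_ge0. Qed.

Let rp_sigma_additive : semi_sigma_additive rp.
Proof.
move=> F mF tF mUF; rewrite /rp /restr_pushforward preimage_bigcup setI_bigcupr.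
apply: measure_semi_sigma_additive.
- by move=> n; exact: mh.
- apply/trivIsetP => /= i j _ _ ij.
  rewrite setIACA -preimage_setI.
  by move/trivIsetP : tF => /(_ _ _ Logic.I Logic.I ij) ->; rewrite preimage_set0 !setI0.
- by rewrite -setI_bigcupr -preimage_bigcup; exact: mh.
Qed.

HB.instance Definition _ := isMeasure.Build _ _ _ rp rp0 rp_ge0 rp_sigma_additive.

Lemma ge0_integral_restr_pushforward (f : X -> \bar R) :
  measurable_fun setT f -> (forall x, 0 <= f x) ->
  \int[restr_pushforward mD mh]_x f x = \int[nu]_(z in D) f (h z).
Proof.
move=> mf f0.
have mhD : measurable_fun setT (h \_ D) := (measurable_restrictT h mD).1 mh.
have := ge0_integral_pushforward mhD (mrestr nu mD) measurableT mf (fun x _ => f0 x).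
rewrite (eq_measure_integral rp); last first.
  move=> A mA _; rewrite /pushforward /mrestr /= /rp /restr_pushforward.
  congr (nu _); apply/seteqP; split => z [].
    by move=> hz Dz; split => //; move: hz; rewrite /preimage /= patchT // inE.
  by move=> Dz hz; split => //; rewrite /preimage /= patchT // inE.
move=> ->; rewrite preimage_setT ge0_integral_mrestr //; last first.
- by move=> z; exact: f0.
- exact: measurableT_comp.
by apply: eq_integral => z; rewrite inE => Dz /=; rewrite patchT // inE.
Qed.

End restr_pushforward.

Lemma fine_probability_gt0 d (T : measurableType d) (R : realType)
    (nu : probability T R) (A : set T) :
  measurable A -> (0 < nu A)%E -> (0 < fine (nu A))%R.
Proof. by move=> mA nuA; rewrite fine_gt0 // nuA /= -ge0_fin_numE ?fin_num_measure. Qed.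

Section cond_pushforward.
Local Open Scope ereal_scope.
Context {dZ dX : measure_display} {Z : measurableType dZ} {X : measurableType dX}
  {R : realType}.
Variables (nu : probability Z R) (D : set Z) (h : Z -> X).
Hypotheses (mD : measurable D) (mh : measurable_fun D h) (nuD_gt0 : 0 < nu D).

(* [\d_point] is only the junk value of [mnormalize] for [nu D = 0]. *)
Definition cond_pushforward : probability X R :=
  mnormalize (restr_pushforward nu mD mh) \d_point.

Let q := fine (nu D).

Let q_gt0 : (0 < q)%R := fine_probability_gt0 mD nuD_gt0.

Lemma cond_pushforwardE (A : set X) :
  cond_pushforward A = nu (D `&` h @^-1` A) * (q^-1)%:E.
Proof.
rewrite /cond_pushforward /= /mnormalize /restr_pushforward /= preimage_setT setIT.
rewrite gt_eqF //= ifF //; apply/negbTE.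
by rewrite -ltey -ge0_fin_numE ?fin_num_measure.
Qed.

Lemma ge0_integral_cond_pushforward (f : X -> \bar R) :
  measurable_fun setT f -> (forall x, 0 <= f x) ->
  \int[cond_pushforward]_x f x = (q^-1)%:E * \int[nu]_(z in D) f (h z).
Proof.
move=> mf f0.
have q0 : (0 <= q^-1)%R by rewrite invr_ge0 ltW // q_gt0.
rewrite (eq_measure_integral (mscale (NngNum q0) (restr_pushforward nu mD mh))).
  by rewrite ge0_integral_mscale //= ge0_integral_restr_pushforward.
by move=> A mA _; rewrite [RHS]muleC; exact: cond_pushforwardE.
Qed.

Lemma outer_prob_preimage_le (E : set X) :
  outer_prob nu (D `&` h @^-1` E) <= q%:E * outer_prob cond_pushforward E.
Proof.
have q0 := q_gt0.
rewrite -lee_pdivrMl //; apply/ereal_infP => _ [A [mA EA] <-].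
rewrite cond_pushforwardE [leRHS]muleC.
apply: lee_wpmul2l; first by rewrite lee_fin invr_ge0 ltW.
by apply: outer_prob_le_measure; [exact: mh | exact: setIS (preimage_subset EA)].
Qed.

End cond_pushforward.

Section dis.
Local Open Scope ereal_scope.
Context d (T : measurableType d) (R : realType) (F : set (T -> R)).

Lemma dis_ge0 : 0 <= dis F.
Proof.
apply: le_trans (ereal_sup_ubound _) => /=; last by exists 1%R, 1%R, \d_point.
by rewrite mule_ge0 ?outer_prob_ge0 // lee_fin divr_ge0 ?exprn_ge0.
Qed.

Lemma outer_prob_dis_event_le (nu : probability T R) (r e del : R) :
  dis F = r%:E -> (0 < e)%R -> (0 < del)%R ->
  outer_prob nu (dis_event F nu e del) <= (r * e ^+ 2 / del ^+ 2)%:E.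
Proof.
move=> disF e0 del0.
have : (del ^+ 2 / e ^+ 2)%:E * outer_prob nu (dis_event F nu e del) <= r%:E.
  by rewrite -disF; apply: ereal_sup_ubound; exists e, del, nu.
rewrite -(fineK (outer_prob_fin_num _ _)) -EFinM !lee_fin.
rewrite -ler_pdivlMl ?divr_gt0 ?exprn_gt0 // invf_div.
by rewrite mulrC mulrA.
Qed.

End dis.

Definition pullback_dis_event dX dZ (X : measurableType dX) (Z : measurableType dZ)
    (R : realType) (F : set (X -> R)) (nu : probability Z R) (D : set Z)
    (h : Z -> X) (e del : R) : set Z :=
  [set z | D z /\ exists f, F f /\
     (\int[nu]_(x in D) ((f (h x)) ^+ 2)%:E <= (e ^+ 2)%:E)%E /\ del < `|f (h z)|].

Section pullback_dis_event.
Local Open Scope ereal_scope.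
Context {dZ dX : measure_display} {Z : measurableType dZ} {X : measurableType dX}
  {R : realType}.
Variables (F : set (X -> R)) (nu : probability Z R) (D : set Z) (h : Z -> X).
Hypotheses (mF : forall f, F f -> measurable_fun setT f)
  (mD : measurable D) (mh : measurable_fun D h).

Lemma outer_prob_pullback_dis_event_le (r e del : R) :
  dis F = r%:E -> (0 < e)%R -> (0 < del)%R ->
  outer_prob nu (pullback_dis_event F nu D h e del) <= (r * e ^+ 2 / del ^+ 2)%:E.
Proof.
move=> disF e0 del0.
have r0 : (0 <= r)%R by rewrite -lee_fin -disF dis_ge0.
have [nuD0|nuD_neq0] := eqVneq (nu D) 0.
  apply: le_trans (outer_prob_le_measure nu mD _) _; first by move=> z [].
  rewrite nuD0 lee_fin.
  by apply: divr_ge0; [exact: mulr_ge0 r0 (sqr_ge0 _) | exact: sqr_ge0].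
have nuD_gt0 : 0 < nu D by rewrite lt0e nuD_neq0 measure_ge0.
pose q := fine (nu D).
have q0 : (0 < q)%R := fine_probability_gt0 mD nuD_gt0.
pose nuD := cond_pushforward nu mD mh.
pose eD := Num.sqrt (e ^+ 2 / q).
have eD2 : (eD ^+ 2 = e ^+ 2 / q)%R by rewrite sqr_sqrtr // divr_ge0 ?exprn_ge0 ?ltW.
have eD0 : (0 < eD)%R by rewrite sqrtr_gt0 divr_gt0 ?exprn_gt0.
have sub : pullback_dis_event F nu D h e del `<=`
    D `&` h @^-1` dis_event F nuD eD del.
  move=> z [Dz [f [Ff [intf delf]]]]; split => //; exists f; split => //; split => //.
  rewrite ge0_integral_cond_pushforward //; last first.
  - by move=> x; rewrite lee_fin sqr_ge0.
  - by apply/measurable_EFinP; apply: measurable_funX; exact: mF.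
  by rewrite eD2 mulrC EFinM lee_wpmul2l // lee_fin invr_ge0 ltW.
apply: le_trans (le_outer_prob nu sub) _.
apply: le_trans (outer_prob_preimage_le mD mh nuD_gt0 _) _.
apply: le_trans (lee_wpmul2l _ (outer_prob_dis_event_le _ disF eD0 del0)) _.
  by rewrite lee_fin ltW.
rewrite -EFinM lee_fin eD2 -/q [leLHS](_ : _ = r * e ^+ 2 / del ^+ 2)%R //.
by field; rewrite !gt_eqF.
Qed.

End pullback_dis_event.

Section composite.
Context {dZ dX : measure_display} {Z : measurableType dZ} {X : measurableType dX}
  {R : realType} (N : nat).
Variables (F : set (X -> R)) (G : set (Z -> R)) (Zs : 'I_N -> set Z) (h : 'I_N -> Z -> X).
Hypotheses (mG : forall g, G g -> measurable_fun setT g)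
  (mZs : forall i, measurable (Zs i))
  (cover : \bigcup_(i in [set: 'I_N]) Zs i = [set: Z])
  (compG : forall g, G g -> exists f : 'I_N -> X -> R,
     (forall i, F (f i)) /\ (forall i x, Zs i x -> g x = f i (h i x))).

Lemma dis_event_composite_sub (nu : probability Z R) (e del : R) :
  dis_event G nu e del `<=`
    \big[setU/set0]_(i < N) pullback_dis_event F nu (Zs i) (h i) e del.
Proof.
move=> z [g [Gg [intg delg]]].
have [j _ Zj] : (\bigcup_(i in [set: 'I_N]) Zs i) z by rewrite cover.
have [f [Ff gf]] := compG Gg.
rewrite (bigD1 j) //=; left; split => //; exists (f j); split => //.
split; last by rewrite -gf.
apply: le_trans intg.
rewrite (eq_integral (fun x => ((g x) ^+ 2)%:E)); last first.
  by move=> x; rewrite inE => Zx; rewrite -gf.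
apply: ge0_subset_integral => //.
- by apply/measurable_EFinP; apply: measurable_funX; exact: mG.
- by move=> x _; rewrite lee_fin sqr_ge0.
Qed.

End composite.

Theorem mainTheorem4 (R : realType) (dX dZ : measure_display)
  (X : measurableType dX) (Z : measurableType dZ) (N : nat)
  (F : set (X -> R)) (G : set (Z -> R)) :
  (0 < N)%N ->
  (forall f, F f -> measurable_fun [set: X] f) ->
  (forall g, G g -> measurable_fun [set: Z] g) ->
  is_composite N G F ->
  (dis G <= N%:R%:E * dis F)%E.
Proof.
move=> N0 mF mG [Zs [h [mZs [_ [cover [mh compG]]]]]].
apply: ge_ereal_sup => _ [e [del [nu [e0 [del0 ->]]]]].
have := dis_ge0 F; case disF: (dis F) => [r| |//] r0; last first.
  by rewrite gt0_muley ?leey // lte_fin ltr0n.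
have bound i : (outer_prob nu (pullback_dis_event F nu (Zs i) (h i) e del) <=
    (r * e ^+ 2 / del ^+ 2)%:E)%E.
  exact: outer_prob_pullback_dis_event_le.
have outerG : (outer_prob nu (dis_event G nu e del) <=
    (N%:R * (r * e ^+ 2 / del ^+ 2))%:E)%E.
  apply: le_trans (le_outer_prob nu (dis_event_composite_sub mG mZs cover compG
    (nu:=nu) (e:=e) (del:=del))) _.
  apply: le_trans (outer_prob_bigsetU _ _) _.
  apply: le_trans (lee_sum _ (fun i _ => bound i)) _.
  by rewrite sumEFin sumr_const card_ord mulr_natl.
apply: le_trans (lee_wpmul2l _ outerG) _; first by rewrite lee_fin divr_ge0 ?sqr_ge0.
rewrite -EFinM lee_fin [leLHS](_ : _ = N%:R * r)%R //.
by field; rewrite !gt_eqF.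
Qed.
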